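(* Let $X_0=0$ and $X_n=\sum_{j=1}^{X_{n-1}}\xi_{n,j}+\varepsilon_n$ for $n\ge1$, where $\{\xi_{n,j},\varepsilon_n\}$ are independent nonnegative integer-valued random variables with $\xi_{n,j}$, $j\in\mathbb N$, identically distributed for each $n$. Let $G_n(x)=\mathbb E x^{\xi_{n,1}}$, $H_n(x)=\mathbb E x^{\varepsilon_n}$, $\rho_n=G_n'(1)$, $G_n''(1)<\infty$, and $m_{n,k}=H_n^{(k)}(1)$ (the $k$-th factorial moment of $\varepsilon_n$, assumed finite for $k\le J$). Let $J\ge 2$ be an integer and assume (i) $\rho_n<1$, $\lim_{n}\rho_n=1$, $\sum_{n=1}^\infty(1-\rho_n)=\infty$, and $\lim_n G_n''(1)/(1-\rho_n)=0$; (ii) $\lim_{n\to\infty}\frac{m_{n,j}}{j(1-\rho_n)}=\lambda_j$ for $j=1,\dots,J$, with $\lambda_J=0$. Then $X_n$ converges in distribution to the compound Poisson distribution $\mathrm{CP}(\mu)$, where $\mu$ is the finite measure on $\{1,\dots,J-1\}$ given by $$\mu\{j\}=\frac{1}{j!}\sum_{i=0}^{J-j-1}\frac{(-1)^i}{i!}\lambda_{j+i},\qquad j=1,\dots,J-1.$$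
   Context: For a finite measure $\mu$ on $\{1,2,\dots\}$, the compound Poisson distribution $\mathrm{CP}(\mu)$ is the distribution on $\{0,1,2,\dots\}$ with generating function $x\mapsto\exp\{\sum_{j\ge1}\mu\{j\}(x^j-1)\}$, $x\in[0,1]$. *)

From Stdlib Require Import Reals Arith.
Open Scope R_scope.

Definition is_pmf (p : nat -> R) : Prop :=
  (forall k, 0 <= p k) /\ infinite_sum p 1.

Fixpoint fall (k j : nat) : R :=
  match j with
  | O => 1
  | S j' => fall k j' * (INR k - INR j')
  end.

(* the j-th factorial moment of p is finite and equals v ( = the j-th
   derivative at 1 of the generating function of p) *)
Definition fact_moment (p : nat -> R) (j : nat) (v : R) : Prop :=
  infinite_sum (fun k => fall k j * p k) v.

Definition delta0 (k : nat) : R := match k with O => 1 | _ => 0 end.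

Definition conv (p q : nat -> R) (n : nat) : R :=
  sum_f_R0 (fun i => p i * q (n - i)%nat) n.

Fixpoint convpow (p : nat -> R) (m : nat) : nat -> R :=
  match m with
  | O => delta0
  | S m' => conv (convpow p m') p
  end.

(* L n = law of X_n, where X_0 = 0 and
   X_n = sum_{j=1}^{X_{n-1}} xi_{n,j} + eps_n, all independent, xi_{n,j} ~ xi n,
   eps_n ~ eps n. *)
Definition is_law_of_process (xi eps : nat -> nat -> R) (L : nat -> nat -> R) : Prop :=
  L O = delta0 /\
  forall n k, infinite_sum
                (fun m => L n m * conv (convpow (xi (S n)) m) (eps (S n)) k)
                (L (S n) k).

(* p is the compound Poisson distribution CP(mu), mu supported on {1..N}:
   generating function x |-> exp (sum_j mu{j} (x^j - 1)) on [0,1] *)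
Definition is_CP (N : nat) (mu : nat -> R) (p : nat -> R) : Prop :=
  is_pmf p /\
  forall x, 0 <= x <= 1 ->
    infinite_sum (fun k => p k * x ^ k)
      (exp (sum_f_R0 (fun i => mu (S i) * (x ^ (S i) - 1)) (N - 1))).

Definition mu_of (J : nat) (lam : nat -> R) (j : nat) : R :=
  / INR (fact j) *
  sum_f_R0 (fun i => (-1) ^ i / INR (fact i) * lam (j + i)%nat) (J - j - 1).

From Stdlib Require Import Reals.
From Stdlib Require Import Arith Lra Lia ClassicalEpsilon.
From Coquelicot Require Series.
Open Scope R_scope.

(* Let f_n, G_n, H_n be the generating functions of X_n, of the offspring law
   xi_n and of the immigration law eps_n.  Independence gives the recursion
   f_n(x) = f_(n-1)(G_n(x)) H_n(x), f_0 = 1.  Put s_n = 1 - rho_n and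
   F(x) = exp (P (1 - x)),  P(a) = sum_(i < J-1) c_i a^(i+1),
   c_i = (-1)^(i+1) lambda_(i+1) / (i+1)!;
   a binomial identity shows that F is the generating function of CP(mu).
   The proof is a contraction argument in three steps.
   1. Taylor expansion of a generating function in terms of its factorial
      moments gives 1 - G_n(x) = (1 - s_n)(1 - x) + O(G_n''(1) (1-x)^2) and
      H_n(x) = 1 + s_n (1 - x) P'(1 - x) + o(s_n)(1 - x); inserted into F this
      yields the one-step estimate |F(G_n(x)) H_n(x) - F(x)| <= d_n (1 - x)
      with d_n = o(s_n).
   2. Since 1 - G_n(x) <= rho_n (1 - x), the errors satisfy
      |f_n(x) - F(x)| <= B_n (1 - x) with B_n = rho_n B_(n-1) + d_n, and the
      divergence of sum s_n forces B_n -> 0, so f_n -> F on [0,1].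
   3. A continuity theorem for generating functions on [0,1], where tightness
      comes from |1 - F(x)| <= B_0 (1 - x), turns this into convergence of the
      point probabilities of X_n to a pmf whose generating function is F. *)

(** * Limits of sequences and sums of series *)

Lemma Rabs_le_inv (a b : R) : Rabs a <= b -> - b <= a <= b.
Proof. unfold Rabs; destruct (Rcase_abs a); lra. Qed.

Lemma pow_le1 (y : R) (k : nat) : 0 <= y <= 1 -> y ^ k <= 1.
Proof. intros H. induction k; simpl. lra. pose proof (pow_le y k (proj1 H)). nra. Qed.

Lemma cv_le_loc (u v : nat -> R) (l1 l2 : R) (N0 : nat) :
  (forall n, (n >= N0)%nat -> u n <= v n) -> Un_cv u l1 -> Un_cv v l2 -> l1 <= l2.
Proof.
  intros Hle Hu Hv. destruct (Rle_or_lt l1 l2) as [|Hlt]; auto.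
  set (e := (l1 - l2) / 2).
  assert (He : e > 0) by (unfold e; lra).
  destruct (Hu e He) as [N1 HN1]. destruct (Hv e He) as [N2 HN2].
  set (n := (N0 + N1 + N2)%nat).
  specialize (HN1 n ltac:(unfold n; lia)). specialize (HN2 n ltac:(unfold n; lia)).
  specialize (Hle n ltac:(unfold n; lia)).
  unfold Rdist in *. apply Rabs_def2 in HN1. apply Rabs_def2 in HN2. unfold e in *. lra.
Qed.

Lemma cv_const (c : R) : Un_cv (fun _ => c) c.
Proof. intros e He; exists 0%nat; intros; unfold Rdist; rewrite Rminus_diag, Rabs_R0; lra. Qed.

Lemma cv_ext (u v : nat -> R) (l : R) :
  (forall n, u n = v n) -> Un_cv u l -> Un_cv v l.
Proof.
  intros Heq Hu e He. destruct (Hu e He) as [N HN]. exists N.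
  intros n Hn. rewrite <- Heq. apply HN; lia.
Qed.

Lemma cv_of_error_bound (u v : nat -> R) (l : R) :
  (forall n, Rabs (u n - l) <= v n) -> Un_cv v 0 -> Un_cv u l.
Proof.
  intros Hle Hv e He. destruct (Hv e He) as [N HN]. exists N.
  intros n Hn. specialize (HN n Hn). specialize (Hle n).
  unfold Rdist in *. rewrite Rminus_0_r in HN. apply Rabs_def2 in HN. lra.
Qed.

Lemma cv_scal (u : nat -> R) (l c : R) : Un_cv u l -> Un_cv (fun n => c * u n) (c * l).
Proof. intros H. apply CV_mult; auto. apply cv_const. Qed.

Lemma cv_abs0 (u : nat -> R) : Un_cv u 0 -> Un_cv (fun n => Rabs (u n)) 0.
Proof.
  intros H e He. destruct (H e He) as [N HN]. exists N. intros n Hn.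
  specialize (HN n Hn). unfold Rdist in *. rewrite Rminus_0_r in *. rewrite Rabs_Rabsolu. auto.
Qed.

Lemma cv_sum0 (f : nat -> nat -> R) (K : nat) :
  (forall i, (i <= K)%nat -> Un_cv (fun n => f i n) 0) ->
  Un_cv (fun n => sum_f_R0 (fun i => f i n) K) 0.
Proof.
  induction K; intros H; simpl. apply H; lia.
  replace 0 with (0 + 0) by ring. apply CV_plus. apply IHK; intros; apply H; lia. apply H; lia.
Qed.

Lemma IS_ext (a b : nat -> R) (l : R) :
  (forall k, a k = b k) -> infinite_sum a l -> infinite_sum b l.
Proof.
  intros H Ha. apply (cv_ext (fun n => sum_f_R0 a n)); auto.
  intros n; apply sum_eq; intros; apply H.
Qed.

Lemma IS_plus (a b : nat -> R) (A B : R) :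
  infinite_sum a A -> infinite_sum b B -> infinite_sum (fun k => a k + b k) (A + B).
Proof.
  intros Ha Hb. apply (cv_ext (fun n => sum_f_R0 a n + sum_f_R0 b n)).
  intros; rewrite sum_plus; auto. apply CV_plus; auto.
Qed.

Lemma IS_scal (a : nat -> R) (A c : R) :
  infinite_sum a A -> infinite_sum (fun k => c * a k) (c * A).
Proof.
  intros Ha. apply (cv_ext (fun n => c * sum_f_R0 a n)).
  intros; rewrite scal_sum; apply sum_eq; intros; ring. apply cv_scal; auto.
Qed.

Lemma IS_minus (a b : nat -> R) (A B : R) :
  infinite_sum a A -> infinite_sum b B -> infinite_sum (fun k => a k - b k) (A - B).
Proof.
  intros Ha Hb. apply (IS_ext (fun k => a k + (-1) * b k)). intros; ring.
  replace (A - B) with (A + (-1) * B) by ring. apply IS_plus; auto. apply IS_scal; auto.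
Qed.

Lemma IS_le (a b : nat -> R) (A B : R) :
  (forall k, a k <= b k) -> infinite_sum a A -> infinite_sum b B -> A <= B.
Proof.
  intros H Ha Hb. apply (cv_le_loc _ _ _ _ 0 (fun n _ => sum_Rle _ _ n (fun i _ => H i)) Ha Hb).
Qed.

Lemma IS_partial_le (a : nat -> R) (A : R) (n : nat) :
  (forall k, 0 <= a k) -> infinite_sum a A -> sum_f_R0 a n <= A.
Proof.
  intros H Ha. apply (cv_le_loc (fun _ => sum_f_R0 a n) (fun m => sum_f_R0 a m) _ _ n).
  - intros m Hm. induction Hm. lra. simpl. specialize (H (S m)). lra.
  - apply cv_const.
  - exact Ha.
Qed.

Lemma IS_nonneg (a : nat -> R) (A : R) : (forall k, 0 <= a k) -> infinite_sum a A -> 0 <= A.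
Proof. intros H Ha. pose proof (IS_partial_le a A 0 H Ha). simpl in *. specialize (H 0%nat). lra. Qed.

Lemma IS_term_le (a : nat -> R) (A : R) (n : nat) :
  (forall k, 0 <= a k) -> infinite_sum a A -> a n <= A.
Proof.
  intros H Ha. pose proof (IS_partial_le a A n H Ha). destruct n. simpl in *; lra.
  simpl in H0. pose proof (cond_pos_sum a n H). lra.
Qed.

Lemma IS_abs_le (a b : nat -> R) (A B : R) :
  (forall k, Rabs (a k) <= b k) -> infinite_sum a A -> infinite_sum b B -> Rabs A <= B.
Proof.
  intros H Ha Hb. apply Rabs_le. split.
  - assert (Hn : infinite_sum (fun k => -1 * b k) (-1 * B)) by (apply IS_scal; auto).
    assert (- B <= A); [| lra].
    replace (-B) with (-1 * B) by ring. refine (IS_le _ _ _ _ _ Hn Ha). intros k.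
    specialize (H k). apply Rabs_le_inv in H. lra.
  - apply (IS_le _ _ _ _ (fun k => Rle_trans _ _ _ (Rle_abs _) (H k)) Ha Hb).
Qed.

Lemma IS_exists_nonneg (a : nat -> R) (B : R) :
  (forall k, 0 <= a k) -> (forall n, sum_f_R0 a n <= B) -> exists A, infinite_sum a A.
Proof.
  intros H Hb. assert (Hg : Un_growing (fun n => sum_f_R0 a n)).
  { intros n; simpl. specialize (H (S n)). lra. }
  assert (Hu : has_ub (fun n => sum_f_R0 a n)). { exists B. intros x [n ->]. apply Hb. }
  destruct (growing_cv _ Hg Hu) as [l Hl]. exists l. exact Hl.
Qed.

Lemma IS_exists_le (a b : nat -> R) (B : R) :
  (forall k, 0 <= a k <= b k) -> infinite_sum b B -> exists A, infinite_sum a A.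
Proof.
  intros H Hb. apply (IS_exists_nonneg a B). intros k; apply H.
  intros n. apply Rle_trans with (sum_f_R0 b n). apply sum_Rle; intros; apply H.
  apply IS_partial_le; auto. intros k; specialize (H k); lra.
Qed.

Lemma IS_interchange (a : nat -> nat -> R) (r c : nat -> R) (S0 : R) :
  (forall m k, 0 <= a m k) ->
  (forall m, infinite_sum (fun k => a m k) (r m)) ->
  (forall k, infinite_sum (fun m => a m k) (c k)) ->
  infinite_sum r S0 -> infinite_sum c S0.
Proof.
  intros Hpos Hr Hc HS.
  assert (Hfin : forall (b : nat -> nat -> R) (t : nat -> R) M,
             (forall i, infinite_sum (b i) (t i)) ->
             infinite_sum (fun k => sum_f_R0 (fun i => b i k) M) (sum_f_R0 t M)).
  { intros b t M Hb. induction M; simpl. apply Hb. apply IS_plus; auto. }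
  assert (Hc0 : forall k, 0 <= c k) by (intros k; apply (IS_nonneg _ _ (fun m => Hpos m k) (Hc k))).
  assert (Hcols : forall K, sum_f_R0 c K <= S0).
  { intros K. refine (IS_le _ _ _ _ _ (Hfin (fun k m => a m k) c K Hc) HS).
    intros m. apply (IS_partial_le _ _ K (fun k => Hpos m k) (Hr m)). }
  destruct (IS_exists_nonneg c S0 Hc0 Hcols) as [Cs HCs].
  assert (Cs <= S0) by (apply (cv_le_loc _ (fun _ => S0) _ _ 0 (fun n _ => Hcols n) HCs (cv_const _))).
  assert (Hrows : forall M, sum_f_R0 r M <= Cs).
  { intros M. refine (IS_le _ _ _ _ _ (Hfin a r M Hr) HCs).
    intros k. apply (IS_partial_le _ _ M (fun m => Hpos m k) (Hc k)). }
  assert (S0 <= Cs) by (apply (cv_le_loc _ (fun _ => Cs) _ _ 0 (fun n _ => Hrows n) HS (cv_const _))).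
  replace S0 with Cs by lra. exact HCs.
Qed.

(** * Generating functions and the law of X_n *)

(* The generating function of p at x (meaningful when the series converges). *)
Definition pgf (p : nat -> R) (x : R) : R :=
  epsilon (inhabits 0) (fun l => infinite_sum (fun k => p k * x ^ k) l).

Lemma pgf_spec (p : nat -> R) (x : R) (l : R) :
  infinite_sum (fun k => p k * x ^ k) l -> pgf p x = l.
Proof.
  intros H. unfold pgf. apply (uniqueness_sum (fun k => p k * x ^ k)); auto.
  apply (epsilon_spec (inhabits 0) (fun l => infinite_sum (fun k => p k * x ^ k) l)). eauto.
Qed.

Lemma pgf_bounds (p : nat -> R) (x : R) : is_pmf p -> 0 <= x <= 1 ->
  infinite_sum (fun k => p k * x ^ k) (pgf p x) /\ 0 <= pgf p x <= 1.
Proof.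
  intros [Hp Hs] Hx.
  assert (Hb : forall k, 0 <= p k * x ^ k <= p k).
  { intros k. split. apply Rmult_le_pos; auto. apply pow_le; lra.
    rewrite <- (Rmult_1_r (p k)) at 2. apply Rmult_le_compat_l; auto. apply pow_le1; lra. }
  destruct (IS_exists_le _ _ _ Hb Hs) as [A HA].
  rewrite (pgf_spec _ _ _ HA). split; auto. split.
  apply (IS_nonneg _ _ (fun k => proj1 (Hb k)) HA).
  apply (IS_le _ _ _ _ (fun k => proj2 (Hb k)) HA Hs).
Qed.

Lemma pgf_at_1 (p : nat -> R) : is_pmf p -> pgf p 1 = 1.
Proof.
  intros [Hp Hs]. apply pgf_spec. apply (IS_ext p). intros; rewrite pow1; ring. auto.
Qed.

Lemma conv_nonneg (p q : nat -> R) : (forall k, 0 <= p k) -> (forall k, 0 <= q k) ->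
  forall n, 0 <= conv p q n.
Proof.
  intros Hp Hq n. unfold conv. apply cond_pos_sum. intros; apply Rmult_le_pos; auto.
Qed.

Lemma conv_gf (p q : nat -> R) (x A B : R) :
  (forall k, 0 <= p k) -> (forall k, 0 <= q k) -> 0 <= x ->
  infinite_sum (fun k => p k * x ^ k) A -> infinite_sum (fun k => q k * x ^ k) B ->
  infinite_sum (fun k => conv p q k * x ^ k) (A * B).
Proof.
  intros Hp Hq Hx HA HB.
  apply Series.is_series_Reals in HA. apply Series.is_series_Reals in HB.
  pose proof (Series.is_series_mult_pos _ _ _ _ HA HB
     (fun n => Rmult_le_pos _ _ (Hp n) (pow_le _ n Hx))
     (fun n => Rmult_le_pos _ _ (Hq n) (pow_le _ n Hx))) as H.
  apply Series.is_series_Reals in H. revert H. apply IS_ext. intros n.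
  unfold conv. rewrite Rmult_comm, scal_sum. apply sum_eq. intros i Hi.
  replace (x ^ n) with (x ^ i * x ^ (n - i)) by (rewrite <- pow_add; f_equal; lia). ring.
Qed.

Lemma delta0_gf (x : R) : infinite_sum (fun k => delta0 k * x ^ k) 1.
Proof.
  apply (cv_ext (fun _ => 1)). intros n. induction n; simpl. ring.
  rewrite <- IHn. ring. apply cv_const.
Qed.

Lemma convpow_nonneg (p : nat -> R) : (forall k, 0 <= p k) -> forall m k, 0 <= convpow p m k.
Proof.
  intros Hp m. induction m; intros k; simpl.
  - destruct k; simpl; lra.
  - apply conv_nonneg; auto.
Qed.

Lemma convpow_gf (p : nat -> R) (x G : R) :
  (forall k, 0 <= p k) -> 0 <= x -> infinite_sum (fun k => p k * x ^ k) G ->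
  forall m, infinite_sum (fun k => convpow p m k * x ^ k) (G ^ m).
Proof.
  intros Hp Hx HG m. induction m; simpl.
  - apply delta0_gf.
  - rewrite Rmult_comm. apply conv_gf; auto. apply convpow_nonneg; auto.
Qed.

Fixpoint process_pgf (xi eps : nat -> nat -> R) (n : nat) (x : R) : R :=
  match n with
  | O => 1
  | S n' => process_pgf xi eps n' (pgf (xi (S n')) x) * pgf (eps (S n')) x
  end.

(* The law of X_n is nonnegative and has generating function process_pgf on [0,1]:
   conditioning on X_(n-1) = m turns E x^(X_n) into G_n(x)^m H_n(x). *)
Lemma law_pgf (xi eps L : nat -> nat -> R) :
  (forall n, (1 <= n)%nat -> is_pmf (xi n)) ->
  (forall n, (1 <= n)%nat -> is_pmf (eps n)) ->
  is_law_of_process xi eps L ->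
  forall n, (forall k, 0 <= L n k) /\
    forall x, 0 <= x <= 1 -> infinite_sum (fun k => L n k * x ^ k) (process_pgf xi eps n x).
Proof.
  intros Hxi Heps [HL0 HL]. induction n as [|n [Hnn Hpg]].
  - rewrite HL0. split. intros k; destruct k; simpl; lra.
    intros x _. apply delta0_gf.
  - assert (Px := Hxi (S n) ltac:(lia)). assert (Pe := Heps (S n) ltac:(lia)).
    set (K := fun m k => conv (convpow (xi (S n)) m) (eps (S n)) k).
    assert (HK : forall m k, 0 <= K m k).
    { intros m k. apply conv_nonneg. apply convpow_nonneg, Px. apply Pe. }
    split.
    + intros k. apply (IS_nonneg _ _ (fun m => Rmult_le_pos _ _ (Hnn m) (HK m k)) (HL n k)).
    + intros x Hx. simpl.
      destruct (pgf_bounds _ x Px Hx) as [HG HGb]. destruct (pgf_bounds _ x Pe Hx) as [HH HHb].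
      set (G := pgf (xi (S n)) x) in *. set (H := pgf (eps (S n)) x) in *.
      apply (IS_interchange (fun m k => L n m * K m k * x ^ k) (fun m => L n m * (G ^ m * H))).
      * intros m k. apply Rmult_le_pos. apply Rmult_le_pos; auto. apply pow_le; lra.
      * intros m. apply (IS_ext (fun k => L n m * (K m k * x ^ k))). intros; ring.
        apply IS_scal. apply conv_gf; auto. apply convpow_nonneg, Px. apply Pe. lra.
        apply convpow_gf; auto. apply Px. lra.
      * intros k. apply (IS_ext (fun m => x ^ k * (L n m * K m k))). intros; ring.
        rewrite Rmult_comm. apply IS_scal. apply HL.
      * apply (IS_ext (fun m => H * (L n m * G ^ m))). intros; ring.
        rewrite Rmult_comm. apply IS_scal. apply Hpg. auto.
Qed.

Lemma process_pgf_at_1 (xi eps : nat -> nat -> R) :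
  (forall n, (1 <= n)%nat -> is_pmf (xi n)) ->
  (forall n, (1 <= n)%nat -> is_pmf (eps n)) ->
  forall n, process_pgf xi eps n 1 = 1.
Proof.
  intros Hxi Heps n. induction n; simpl; auto.
  rewrite !pgf_at_1, IHn by (first [apply Hxi | apply Heps]; lia). ring.
Qed.

(** * Taylor expansion of a generating function around 1 *)

Definition binom (k j : nat) : R := fall k j / INR (fact j).

Fixpoint binom_taylor (k : nat) (t : R) (J : nat) : R :=
  match J with O => 0 | S J' => binom_taylor k t J' + binom k J' * t ^ J' end.

Fixpoint moment_taylor (mm : nat -> R) (t : R) (J : nat) : R :=
  match J with O => 0 | S J' => moment_taylor mm t J' + mm J' / INR (fact J') * t ^ J' end.

Lemma fall_S k j : fall (S k) (S j) = INR (S k) * fall k j.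
Proof.
  induction j. simpl. ring.
  change (fall (S k) (S (S j))) with (fall (S k) (S j) * (INR (S k) - INR (S j))).
  rewrite IHj. change (fall k (S j)) with (fall k j * (INR k - INR j)).
  rewrite !S_INR. ring.
Qed.

Lemma binom_rec k j : binom (S k) (S j) = binom k (S j) + binom k j.
Proof.
  unfold binom. rewrite fall_S. change (fall k (S j)) with (fall k j * (INR k - INR j)).
  rewrite fact_simpl, mult_INR. pose proof (INR_fact_lt_0 j). rewrite !S_INR.
  pose proof (pos_INR j). field. lra.
Qed.

Lemma binom_0 k : binom k 0 = 1.
Proof. unfold binom; simpl. field. Qed.

Lemma binom_0S j : binom 0 (S j) = 0.
Proof.
  unfold binom. replace (fall 0 (S j)) with 0; [unfold Rdiv; ring |].
  induction j. simpl; ring.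
  change (fall 0 (S (S j))) with (fall 0 (S j) * (INR 0 - INR (S j))). rewrite <- IHj. ring.
Qed.

Lemma binom_nonneg k j : 0 <= binom k j.
Proof.
  revert j. induction k; intros j.
  - destruct j. rewrite binom_0; lra. rewrite binom_0S; lra.
  - destruct j. rewrite binom_0; lra. rewrite binom_rec. pose proof (IHk (S j)). pose proof (IHk j). lra.
Qed.

Lemma fall_nonneg k j : 0 <= fall k j.
Proof.
  pose proof (binom_nonneg k j). unfold binom in H. pose proof (INR_fact_lt_0 j).
  replace (fall k j) with (fall k j / INR (fact j) * INR (fact j)) by (field; lra).
  apply Rmult_le_pos; lra.
Qed.

Lemma binom_taylor_rec k t J :
  binom_taylor (S k) t (S J) = binom_taylor k t (S J) + t * binom_taylor k t J.
Proof.
  induction J.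
  - simpl. rewrite !binom_0. ring.
  - change (binom_taylor (S k) t (S (S J)))
      with (binom_taylor (S k) t (S J) + binom (S k) (S J) * t ^ (S J)).
    rewrite IHJ, binom_rec. simpl. ring.
Qed.

Lemma binom_taylor_0 t J : binom_taylor 0 t (S J) = 1.
Proof.
  induction J. simpl. rewrite binom_0. ring.
  change (binom_taylor 0 t (S (S J))) with (binom_taylor 0 t (S J) + binom 0 (S J) * t ^ (S J)).
  rewrite IHJ, binom_0S. ring.
Qed.

Lemma binom_taylor_remainder (t : R) : -1 <= t <= 0 -> forall k J,
  Rabs ((1 + t) ^ k - binom_taylor k t J) <= binom k J * Rabs t ^ J.
Proof.
  intros Ht k. induction k; intros J.
  - destruct J. simpl. rewrite binom_0, Rminus_0_r, Rabs_R1. lra.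
    rewrite binom_taylor_0. simpl. rewrite Rminus_diag, Rabs_R0. apply Rmult_le_pos. apply binom_nonneg.
    apply Rmult_le_pos. apply Rabs_pos. apply pow_le, Rabs_pos.
  - destruct J.
    + simpl binom_taylor. rewrite binom_0, Rminus_0_r. simpl. rewrite Rabs_mult.
      assert (Rabs (1 + t) <= 1) by (unfold Rabs; destruct (Rcase_abs _); lra).
      assert (Rabs ((1 + t) ^ k) <= 1).
      { rewrite <- RPow_abs. apply pow_le1. split. apply Rabs_pos. auto. }
      pose proof (Rabs_pos (1 + t)). pose proof (Rabs_pos ((1 + t) ^ k)). nra.
    + rewrite binom_taylor_rec.
      replace ((1 + t) ^ S k - (binom_taylor k t (S J) + t * binom_taylor k t J))
        with (((1 + t) ^ k - binom_taylor k t (S J)) + t * ((1 + t) ^ k - binom_taylor k t J))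
        by (simpl; ring).
      eapply Rle_trans. apply Rabs_triang. rewrite Rabs_mult, binom_rec.
      specialize (IHk (S J)) as H1.
      assert (H2 : Rabs t * Rabs ((1 + t) ^ k - binom_taylor k t J) <= Rabs t * (binom k J * Rabs t ^ J))
        by (apply Rmult_le_compat_l; [apply Rabs_pos | apply IHk]).
      simpl pow in *. lra.
Qed.

Lemma moment_taylor_sum (p : nat -> R) (mm : nat -> R) (t : R) (J : nat) :
  (forall j, (j < J)%nat -> fact_moment p j (mm j)) ->
  infinite_sum (fun k => p k * binom_taylor k t J) (moment_taylor mm t J).
Proof.
  induction J; intros H; simpl.
  - apply (cv_ext (fun _ => 0)). intros n; induction n; simpl. ring. rewrite <- IHn; ring.
    apply cv_const.
  - apply (IS_ext (fun k => p k * binom_taylor k t J + (t ^ J / INR (fact J)) * (fall k J * p k))).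
    intros k. unfold binom, Rdiv. ring.
    apply IS_plus. apply IHJ; intros; apply H; lia.
    replace (mm J / INR (fact J) * t ^ J) with (t ^ J / INR (fact J) * mm J) by (unfold Rdiv; ring).
    apply IS_scal. apply H. lia.
Qed.

Lemma pgf_taylor (p : nat -> R) (mm : nat -> R) (x : R) (J : nat) :
  is_pmf p -> 0 <= x <= 1 ->
  (forall j, (j <= J)%nat -> fact_moment p j (mm j)) ->
  Rabs (pgf p x - moment_taylor mm (x - 1) J) <= mm J / INR (fact J) * (1 - x) ^ J.
Proof.
  intros Hp Hx Hm. destruct (pgf_bounds p x Hp Hx) as [HG _].
  assert (H1 := moment_taylor_sum p mm (x - 1) J (fun j Hj => Hm j ltac:(lia))).
  assert (H3 : infinite_sum (fun k => ((1 - x) ^ J / INR (fact J)) * (fall k J * p k))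
                 (((1 - x) ^ J / INR (fact J)) * mm J)) by (apply IS_scal, Hm; lia).
  replace (mm J / INR (fact J) * (1 - x) ^ J) with ((1 - x) ^ J / INR (fact J) * mm J)
    by (unfold Rdiv; ring).
  refine (IS_abs_le _ _ _ _ _ (IS_minus _ _ _ _ HG H1) H3). intros k.
  replace (p k * x ^ k - p k * binom_taylor k (x - 1) J)
    with (p k * ((1 + (x - 1)) ^ k - binom_taylor k (x - 1) J))
    by (replace (1 + (x - 1)) with x by ring; ring).
  rewrite Rabs_mult. destruct Hp as [Hp0 _].
  rewrite (Rabs_right (p k)) by (apply Rle_ge; auto).
  pose proof (binom_taylor_remainder (x - 1) ltac:(lra) k J) as H.
  replace (Rabs (x - 1)) with (1 - x) in H by (unfold Rabs; destruct (Rcase_abs _); lra).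
  unfold binom in H.
  replace ((1 - x) ^ J / INR (fact J) * (fall k J * p k))
    with (p k * (fall k J / INR (fact J) * (1 - x) ^ J)) by (unfold Rdiv; ring).
  apply Rmult_le_compat_l; auto.
Qed.

Lemma bernoulli (x : R) (k : nat) : 0 <= x -> 1 + INR k * (x - 1) <= x ^ k.
Proof.
  intros Hx. induction k. simpl. lra.
  rewrite S_INR. simpl. pose proof (pos_INR k).
  assert (x * (1 + INR k * (x - 1)) <= x * x ^ k) by (apply Rmult_le_compat_l; auto).
  assert (0 <= INR k * ((x - 1) * (x - 1))) by (apply Rmult_le_pos; [auto | apply Rle_0_sqr]). nra.
Qed.

(* Convexity of a generating function: it lies above its tangent at 1. *)
Lemma pgf_lower (p : nat -> R) (r x : R) :
  is_pmf p -> 0 <= x <= 1 -> fact_moment p 1 r -> 1 + r * (x - 1) <= pgf p x.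
Proof.
  intros Hp Hx Hr. destruct (pgf_bounds p x Hp Hx) as [HG _]. destruct Hp as [Hp0 Hs].
  assert (H : infinite_sum (fun k => p k + (x - 1) * (fall k 1 * p k)) (1 + (x - 1) * r)).
  { apply IS_plus; auto. apply IS_scal; auto. }
  replace (1 + r * (x - 1)) with (1 + (x - 1) * r) by ring.
  refine (IS_le _ _ _ _ _ H HG). intros k. simpl fall.
  pose proof (bernoulli x k ltac:(lra)). specialize (Hp0 k).
  assert (p k * (1 + INR k * (x - 1)) <= p k * x ^ k) by (apply Rmult_le_compat_l; auto).
  change (INR 0) with 0. lra.
Qed.

Lemma fact_moment_nonneg (p : nat -> R) j v : is_pmf p -> fact_moment p j v -> 0 <= v.
Proof. intros [Hp _] H. apply (IS_nonneg _ _ (fun k => Rmult_le_pos _ _ (fall_nonneg k j) (Hp k)) H). Qed.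

Lemma fact_moment_0 (p : nat -> R) : is_pmf p -> fact_moment p 0 1.
Proof. intros [_ Hs]. unfold fact_moment. revert Hs. apply IS_ext. intros; simpl; ring. Qed.

(** * The exponent of the compound Poisson generating function *)

Lemma exp_le_mono x y : x <= y -> exp x <= exp y.
Proof. intros H. destruct (Rle_lt_or_eq_dec _ _ H). left; apply exp_increasing; auto. subst; lra. Qed.

Lemma exp_one_minus_le y : exp y * (1 - y) <= 1.
Proof.
  pose proof (exp_ineq1_le (- y)). rewrite exp_Ropp in H. pose proof (exp_pos y).
  apply Rmult_le_reg_r with (/ exp y). apply Rinv_0_lt_compat; auto.
  rewrite Rmult_comm, <- Rmult_assoc, Rinv_l by lra. lra.
Qed.

Lemma exp_m1_bound y : Rabs (exp y - 1) <= Rabs y * exp (Rabs y).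
Proof.
  pose proof (exp_ineq1_le y). pose proof (exp_one_minus_le y). pose proof (exp_pos y).
  destruct (Rle_or_lt 0 y).
  - rewrite !Rabs_right by lra. nra.
  - assert (exp y < 1) by (rewrite <- exp_0; apply exp_increasing; lra).
    rewrite (Rabs_left y), Rabs_left1 by lra.
    assert (1 <= exp (- y)) by (pose proof (exp_ineq1_le (- y)); lra).
    assert (- y * 1 <= - y * exp (- y)) by (apply Rmult_le_compat_l; lra). lra.
Qed.

Lemma exp_m1y_bound y : Rabs (exp y - 1 - y) <= y ^ 2 * exp (Rabs y).
Proof.
  pose proof (exp_ineq1_le y). pose proof (exp_one_minus_le y). pose proof (exp_pos y).
  assert (H2x : exp y - 1 - y <= y * (exp y - 1)) by nra.
  rewrite Rabs_right by lra.
  pose proof (exp_m1_bound y).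
  assert (y * (exp y - 1) <= Rabs y * Rabs (exp y - 1)) by (rewrite <- Rabs_mult; apply Rle_abs).
  assert (Rabs y * Rabs (exp y - 1) <= Rabs y * (Rabs y * exp (Rabs y)))
    by (apply Rmult_le_compat_l; auto; apply Rabs_pos).
  replace (y ^ 2) with (Rabs y * Rabs y) by (rewrite <- pow2_abs; ring). lra.
Qed.

Lemma pow_taylor2 (u a : R) (i : nat) : 0 <= u <= 1 -> 0 <= a <= 1 ->
  Rabs (u ^ S i - a ^ S i - INR (S i) * a ^ i * (u - a)) <= INR (S i) ^ 2 * (u - a) ^ 2.
Proof.
  intros Hu Ha. induction i.
  - simpl. replace (u * 1 - a * 1 - 1 * 1 * (u - a)) with 0 by ring. rewrite Rabs_R0.
    apply Rmult_le_pos. lra. apply pow2_ge_0.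
  - replace (u ^ S (S i) - a ^ S (S i) - INR (S (S i)) * a ^ S i * (u - a))
      with (u * (u ^ S i - a ^ S i - INR (S i) * a ^ i * (u - a)) + INR (S i) * a ^ i * (u - a) ^ 2)
      by (rewrite (S_INR (S i)); simpl; ring).
    eapply Rle_trans. apply Rabs_triang. rewrite !Rabs_mult.
    set (E := u ^ S i - a ^ S i - INR (S i) * a ^ i * (u - a)) in *.
    rewrite (Rabs_right u), (Rabs_right (INR (S i))), (Rabs_right (a ^ i)), (Rabs_right ((u - a) ^ 2));
      try (apply Rle_ge; first [apply pow2_ge_0 | apply pos_INR | apply pow_le; lra | lra]).
    pose proof (pos_INR (S i)). pose proof (pow2_ge_0 (u - a)). pose proof (pow_le1 a i Ha).
    pose proof (Rabs_pos E).
    assert (u * Rabs E <= INR (S i) ^ 2 * (u - a) ^ 2) by nra.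
    assert (INR (S i) * a ^ i * (u - a) ^ 2 <= INR (S i) * (u - a) ^ 2).
    { apply Rmult_le_compat_r; auto. rewrite <- (Rmult_1_r (INR (S i))) at 2.
      apply Rmult_le_compat_l; auto. }
    rewrite (S_INR (S i)). nra.
Qed.

Section CPExponent.

(* The exponent P(a) = sum_(i<=N) c_i a^(i+1), so that F(x) = exp (P (1 - x)),
   its derivative M = P', and the constants controlling them on [0,1]. *)
Variable c : nat -> R.
Variable N : nat.

Definition cp_poly (a : R) := sum_f_R0 (fun i => c i * a ^ S i) N.
Definition cp_deriv (a : R) := sum_f_R0 (fun i => c i * INR (S i) * a ^ i) N.
Definition cp_C0 := sum_f_R0 (fun i => Rabs (c i)) N.
Definition cp_C1 := sum_f_R0 (fun i => Rabs (c i) * INR (S i)) N.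
Definition cp_C2 := sum_f_R0 (fun i => Rabs (c i) * INR (S i) ^ 2) N.
Definition cp_Lip := cp_C1 + cp_C2.

(* The coefficient of (1 - x) in the one-step error, in terms of the immigration
   parameter s, the offspring curvature g and the immigration moment error e1. *)
Definition delta_loc (s g e1 : R) :=
  exp cp_C0 * (cp_Lip * exp cp_Lip * (s + g) * (s * cp_C1 + e1) + cp_C1 * g
               + (cp_C2 + cp_Lip ^ 2 * exp cp_Lip) * (s + g) ^ 2 + e1).

Lemma cp_C0_nonneg : 0 <= cp_C0.
Proof. apply cond_pos_sum; intros; apply Rabs_pos. Qed.
Lemma cp_C1_nonneg : 0 <= cp_C1.
Proof. apply cond_pos_sum; intros; apply Rmult_le_pos. apply Rabs_pos. apply pos_INR. Qed.
Lemma cp_C2_nonneg : 0 <= cp_C2.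
Proof. apply cond_pos_sum; intros; apply Rmult_le_pos. apply Rabs_pos. apply pow_le, pos_INR. Qed.
Lemma cp_Lip_nonneg : 0 <= cp_Lip.
Proof. pose proof cp_C1_nonneg. pose proof cp_C2_nonneg. unfold cp_Lip; lra. Qed.

Lemma cp_poly_bound a : 0 <= a <= 1 -> Rabs (cp_poly a) <= cp_C0 * a.
Proof.
  intros Ha. unfold cp_poly, cp_C0. eapply Rle_trans. apply sum_f_R0_triangle.
  rewrite Rmult_comm, scal_sum. apply sum_Rle. intros i _. rewrite Rabs_mult.
  apply Rmult_le_compat_l. apply Rabs_pos.
  rewrite Rabs_right by (apply Rle_ge, pow_le; lra). simpl.
  pose proof (pow_le1 a i Ha). pose proof (pow_le a i (proj1 Ha)). nra.
Qed.

Lemma cp_deriv_bound a : 0 <= a <= 1 -> Rabs (cp_deriv a) <= cp_C1.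
Proof.
  intros Ha. unfold cp_deriv, cp_C1. eapply Rle_trans. apply sum_f_R0_triangle.
  apply sum_Rle. intros i _. rewrite !Rabs_mult.
  rewrite (Rabs_right (INR (S i))) by (apply Rle_ge, pos_INR).
  rewrite (Rabs_right (a ^ i)) by (apply Rle_ge, pow_le; lra).
  pose proof (pow_le1 a i Ha). pose proof (pow_le a i (proj1 Ha)).
  pose proof (Rabs_pos (c i)). pose proof (pos_INR (S i)).
  rewrite <- (Rmult_1_r (Rabs (c i) * INR (S i))) at 2. apply Rmult_le_compat_l; auto.
  apply Rmult_le_pos; auto.
Qed.

Lemma cp_poly_taylor u a : 0 <= u <= 1 -> 0 <= a <= 1 ->
  Rabs (cp_poly u - cp_poly a - cp_deriv a * (u - a)) <= cp_C2 * (u - a) ^ 2.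
Proof.
  intros Hu Ha. unfold cp_poly, cp_deriv.
  replace (sum_f_R0 (fun i => c i * u ^ S i) N - sum_f_R0 (fun i => c i * a ^ S i) N
           - sum_f_R0 (fun i => c i * INR (S i) * a ^ i) N * (u - a))
    with (sum_f_R0 (fun i => c i * (u ^ S i - a ^ S i - INR (S i) * a ^ i * (u - a))) N)
    by (induction N as [|n IH]; cbn [sum_f_R0]; [ring | rewrite IH; ring]).
  eapply Rle_trans. apply sum_f_R0_triangle. unfold cp_C2. rewrite Rmult_comm, scal_sum.
  apply sum_Rle. intros i _. rewrite Rabs_mult.
  replace (Rabs (c i) * INR (S i) ^ 2 * (u - a) ^ 2)
    with (Rabs (c i) * (INR (S i) ^ 2 * (u - a) ^ 2)) by ring.
  apply Rmult_le_compat_l. apply Rabs_pos. apply pow_taylor2; auto.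
Qed.

Lemma cp_poly_lipschitz u a : 0 <= u <= 1 -> 0 <= a <= 1 ->
  Rabs (cp_poly u - cp_poly a) <= cp_Lip * Rabs (u - a).
Proof.
  intros Hu Ha. pose proof (cp_poly_taylor u a Hu Ha) as HT.
  pose proof (cp_deriv_bound a Ha) as HM. pose proof cp_C2_nonneg.
  assert (Hd : (u - a) ^ 2 <= Rabs (u - a)).
  { rewrite <- pow2_abs. assert (Rabs (u - a) <= 1) by (apply Rabs_le; lra).
    pose proof (Rabs_pos (u - a)). simpl; nra. }
  assert (HMd : Rabs (cp_deriv a * (u - a)) <= cp_C1 * Rabs (u - a))
    by (rewrite Rabs_mult; apply Rmult_le_compat_r; auto; apply Rabs_pos).
  replace (cp_poly u - cp_poly a)
    with ((cp_poly u - cp_poly a - cp_deriv a * (u - a)) + cp_deriv a * (u - a)) by ring.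
  eapply Rle_trans. apply Rabs_triang.
  assert (cp_C2 * (u - a) ^ 2 <= cp_C2 * Rabs (u - a)) by (apply Rmult_le_compat_l; auto).
  unfold cp_Lip. lra.
Qed.

Lemma cp_increment_estimate (a u s g : R) :
  0 <= a <= 1 -> 0 <= u <= 1 -> 0 <= s -> 0 <= g ->
  Rabs ((a - u) - s * a) <= g * a -> Rabs (a - u) <= (s + g) * a ->
  Rabs (cp_poly u - cp_poly a) <= cp_Lip * ((s + g) * a) /\
  Rabs (cp_poly u - cp_poly a) <= cp_Lip /\
  Rabs (cp_poly u - cp_poly a + s * a * cp_deriv a) <= (cp_C1 * g + cp_C2 * (s + g) ^ 2) * a.
Proof.
  intros Ha Hu Hs Hg Hd1 Hd2.
  pose proof cp_C1_nonneg. pose proof cp_C2_nonneg. pose proof cp_Lip_nonneg.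
  set (d := a - u) in *. set (D := cp_poly u - cp_poly a).
  split; [| split].
  - eapply Rle_trans. apply cp_poly_lipschitz; auto.
    rewrite Rabs_minus_sym. apply Rmult_le_compat_l; auto.
  - eapply Rle_trans. apply cp_poly_lipschitz; auto. rewrite <- (Rmult_1_r cp_Lip) at 2.
    apply Rmult_le_compat_l; auto. apply Rabs_le; lra.
  - assert (HT : Rabs (D + cp_deriv a * d) <= cp_C2 * d ^ 2).
    { replace (D + cp_deriv a * d) with (cp_poly u - cp_poly a - cp_deriv a * (u - a)) by (unfold D, d; ring).
      replace (d ^ 2) with ((u - a) ^ 2) by (unfold d; ring). apply cp_poly_taylor; auto. }
    assert (Hd2sq : d ^ 2 <= (s + g) ^ 2 * a).
    { rewrite <- pow2_abs. pose proof (Rabs_pos d). assert (0 <= (s + g) ^ 2) by apply pow2_ge_0.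
      apply Rle_trans with (((s + g) * a) ^ 2). apply pow_incr; lra.
      rewrite Rpow_mult_distr. apply Rmult_le_compat_l; auto. simpl; nra. }
    assert (HM := cp_deriv_bound a Ha).
    replace (D + s * a * cp_deriv a) with ((D + cp_deriv a * d) - (d - s * a) * cp_deriv a) by ring.
    eapply Rle_trans. apply Rabs_triang. rewrite Rabs_Ropp, Rabs_mult.
    assert (Rabs (d - s * a) * Rabs (cp_deriv a) <= (g * a) * cp_C1)
      by (apply Rmult_le_compat; auto; apply Rabs_pos).
    assert (cp_C2 * d ^ 2 <= cp_C2 * ((s + g) ^ 2 * a)) by (apply Rmult_le_compat_l; auto). lra.
Qed.

Lemma cp_local_estimate (a u s g e1 h : R) :
  0 <= a <= 1 -> 0 <= u <= 1 -> 0 <= s -> 0 <= g -> 0 <= e1 ->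
  Rabs ((a - u) - s * a) <= g * a -> Rabs (a - u) <= (s + g) * a ->
  Rabs (h - 1 - s * a * cp_deriv a) <= e1 * a ->
  Rabs (exp (cp_poly u) * h - exp (cp_poly a)) <= delta_loc s g e1 * a.
Proof.
  intros Ha Hu Hs Hg He1 Hd1 Hd2 Hh.
  pose proof cp_C0_nonneg. pose proof cp_C1_nonneg. pose proof cp_Lip_nonneg.
  destruct (cp_increment_estimate a u s g Ha Hu Hs Hg Hd1 Hd2) as [HD [HD1 HDM]].
  set (D := cp_poly u - cp_poly a) in *.
  assert (HeD : exp (Rabs D) <= exp cp_Lip) by (apply exp_le_mono; auto).
  assert (Hh1 : Rabs (h - 1) <= s * cp_C1 + e1).
  { replace (h - 1) with ((h - 1 - s * a * cp_deriv a) + s * a * cp_deriv a) by ring.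
    eapply Rle_trans. apply Rabs_triang. rewrite !Rabs_mult, (Rabs_right s), (Rabs_right a) by lra.
    pose proof (cp_deriv_bound a Ha). pose proof (Rabs_pos (cp_deriv a)).
    assert (a * Rabs (cp_deriv a) <= cp_C1) by nra.
    assert (s * (a * Rabs (cp_deriv a)) <= s * cp_C1) by (apply Rmult_le_compat_l; lra).
    assert (e1 * a <= e1) by nra. lra. }
  assert (HPa : exp (cp_poly a) <= exp cp_C0).
  { apply exp_le_mono. pose proof (cp_poly_bound a Ha). pose proof (Rle_abs (cp_poly a)). nra. }
  set (X := exp D).
  assert (HPu : exp (cp_poly u) = exp (cp_poly a) * X)
    by (unfold X, D; rewrite <- exp_plus; f_equal; ring).
  replace (exp (cp_poly u) * h - exp (cp_poly a)) with (exp (cp_poly a) * (X * h - 1))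
    by (rewrite HPu; ring).
  rewrite Rabs_mult, (Rabs_right (exp (cp_poly a))) by (apply Rle_ge, Rlt_le, exp_pos).
  unfold delta_loc. rewrite Rmult_assoc.
  apply Rmult_le_compat. apply Rlt_le, exp_pos. apply Rabs_pos. auto.
  (* X h - 1 = (X-1)(h-1) + (X-1-D) + (D + s a P'(a)) + (h - 1 - s a P'(a)) *)
  assert (T1 : Rabs ((X - 1) * (h - 1)) <= cp_Lip * exp cp_Lip * (s + g) * (s * cp_C1 + e1) * a).
  { rewrite Rabs_mult. pose proof (exp_m1_bound D) as HX. fold X in HX.
    assert (Rabs (X - 1) <= cp_Lip * ((s + g) * a) * exp cp_Lip).
    { eapply Rle_trans. apply HX. apply Rmult_le_compat; auto. apply Rabs_pos. apply Rlt_le, exp_pos. }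
    replace (cp_Lip * exp cp_Lip * (s + g) * (s * cp_C1 + e1) * a)
      with ((cp_Lip * ((s + g) * a) * exp cp_Lip) * (s * cp_C1 + e1)) by ring.
    apply Rmult_le_compat; auto; apply Rabs_pos. }
  assert (T2 : Rabs (X - 1 - D) <= cp_Lip ^ 2 * exp cp_Lip * (s + g) ^ 2 * a).
  { eapply Rle_trans. apply exp_m1y_bound.
    assert (D ^ 2 <= cp_Lip ^ 2 * ((s + g) ^ 2 * a)).
    { rewrite <- pow2_abs. pose proof (Rabs_pos D). apply Rle_trans with ((cp_Lip * ((s + g) * a)) ^ 2).
      apply pow_incr; lra. rewrite !Rpow_mult_distr. apply Rmult_le_compat_l. apply pow2_ge_0.
      apply Rmult_le_compat_l. apply pow2_ge_0. simpl; nra. }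
    replace (cp_Lip ^ 2 * exp cp_Lip * (s + g) ^ 2 * a)
      with ((cp_Lip ^ 2 * ((s + g) ^ 2 * a)) * exp cp_Lip) by ring.
    apply Rmult_le_compat; auto. apply pow2_ge_0. apply Rlt_le, exp_pos. }
  replace (X * h - 1) with ((X - 1) * (h - 1) + (X - 1 - D) + (D + s * a * cp_deriv a)
                            + (h - 1 - s * a * cp_deriv a)) by ring.
  pose proof (Rabs_triang ((X - 1) * (h - 1) + (X - 1 - D) + (D + s * a * cp_deriv a))
                          (h - 1 - s * a * cp_deriv a)).
  pose proof (Rabs_triang ((X - 1) * (h - 1) + (X - 1 - D)) (D + s * a * cp_deriv a)).
  pose proof (Rabs_triang ((X - 1) * (h - 1)) (X - 1 - D)).
  lra.
Qed.

Lemma cp_pgf_near_1 x : 0 <= x <= 1 ->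
  Rabs (1 - exp (cp_poly (1 - x))) <= cp_C0 * exp cp_C0 * (1 - x).
Proof.
  intros Hx. rewrite Rabs_minus_sym. eapply Rle_trans. apply exp_m1_bound.
  pose proof (cp_poly_bound (1 - x) ltac:(lra)). pose proof cp_C0_nonneg.
  assert (exp (Rabs (cp_poly (1 - x))) <= exp cp_C0) by (apply exp_le_mono; nra).
  replace (cp_C0 * exp cp_C0 * (1 - x)) with ((cp_C0 * (1 - x)) * exp cp_C0) by ring.
  apply Rmult_le_compat; auto. apply Rabs_pos. apply Rlt_le, exp_pos.
Qed.

End CPExponent.

Lemma delta_loc_nonneg c N s g e1 : 0 <= s -> 0 <= g -> 0 <= e1 -> 0 <= delta_loc c N s g e1.
Proof.
  intros. unfold delta_loc. pose proof (cp_C0_nonneg c N). pose proof (cp_C1_nonneg c N).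
  pose proof (cp_C2_nonneg c N). pose proof (cp_Lip_nonneg c N).
  pose proof (exp_pos (cp_Lip c N)). pose proof (exp_pos (cp_C0 c N)).
  apply Rmult_le_pos. lra.
  repeat apply Rplus_le_le_0_compat; repeat apply Rmult_le_pos; try lra; try (apply pow_le; lra); nra.
Qed.

(** * The one-step estimate *)

Definition cp_coef (lam : nat -> R) (i : nat) : R := lam (S i) * (-1) ^ (S i) / INR (fact (S i)).

Definition moment_dev (N : nat) (lam mm : nat -> R) (s : R) : R :=
  sum_f_R0 (fun i => Rabs (mm (S i) / (INR (S i) * s) - lam (S i)) * INR (S i)) N.

(* The immigration error: deviation of the moments of order <= N+1 plus the
   Taylor remainder of order N+2. *)
Definition immigration_error (N : nat) (lam mm : nat -> R) (s : R) : R :=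
  s * moment_dev N lam mm s + mm (S (S N)) / INR (fact (S (S N))).

Lemma moment_dev_nonneg N lam mm s : 0 <= moment_dev N lam mm s.
Proof. apply cond_pos_sum. intros; apply Rmult_le_pos. apply Rabs_pos. apply pos_INR. Qed.

Lemma immigration_error_nonneg (N : nat) (lam pe mm : nat -> R) (s : R) :
  is_pmf pe -> fact_moment pe (S (S N)) (mm (S (S N))) -> 0 <= s ->
  0 <= immigration_error N lam mm s.
Proof.
  intros Pe Hm Hs. unfold immigration_error. pose proof (moment_dev_nonneg N lam mm s).
  pose proof (fact_moment_nonneg pe _ _ Pe Hm). pose proof (INR_fact_lt_0 (S (S N))).
  apply Rplus_le_le_0_compat. apply Rmult_le_pos; lra.
  apply Rmult_le_pos; auto. apply Rlt_le, Rinv_0_lt_compat; auto.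
Qed.

Lemma moment_taylor_split (mm : nat -> R) (t : R) (N : nat) :
  moment_taylor mm t (S (S N)) = mm 0%nat + sum_f_R0 (fun i => mm (S i) / INR (fact (S i)) * t ^ S i) N.
Proof.
  induction N.
  - simpl. field.
  - change (moment_taylor mm t (S (S (S N))))
      with (moment_taylor mm t (S (S N)) + mm (S (S N)) / INR (fact (S (S N))) * t ^ (S (S N))).
    rewrite IHN, tech5. unfold Rdiv. ring.
Qed.

Lemma offspring_estimate (px : nat -> R) (rh g2v x : R) :
  is_pmf px -> fact_moment px 1 rh -> fact_moment px 2 g2v -> 0 <= x <= 1 ->
  Rabs (((1 - x) - (1 - pgf px x)) - (1 - rh) * (1 - x)) <= g2v / 2 * (1 - x).
Proof.
  intros Px Hrh Hg2 Hx.
  set (mm2 := fun j => match j with 0 => 1 | 1 => rh | _ => g2v end).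
  assert (T : Rabs (pgf px x - moment_taylor mm2 (x - 1) 2) <= mm2 2%nat / INR (fact 2) * (1 - x) ^ 2).
  { apply pgf_taylor; auto. intros j Hj. destruct j as [|[|[|j]]]; simpl mm2.
    apply fact_moment_0; auto. auto. auto. lia. }
  simpl mm2 in T. simpl moment_taylor in T. simpl fact in T.
  replace (((1 - x) - (1 - pgf px x)) - (1 - rh) * (1 - x))
    with (pgf px x - (0 + 1 / INR 1 * 1 + rh / INR 1 * ((x - 1) * 1))) by (simpl; field).
  eapply Rle_trans. apply T. simpl.
  assert (0 <= g2v) by (apply (fact_moment_nonneg px 2); auto).
  assert ((1 - x) * ((1 - x) * 1) <= 1 - x) by nra.
  replace (g2v / 2 * 1 * ((1 - x) * ((1 - x) * 1))) with (g2v / 2 * ((1 - x) * ((1 - x) * 1))) by ring.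
  apply Rmult_le_compat_l; lra.
Qed.

Lemma immigration_moment_terms (N : nat) (lam mm : nat -> R) (s a : R) :
  0 < s -> 0 <= a <= 1 ->
  Rabs (sum_f_R0 (fun i => mm (S i) / INR (fact (S i)) * (- a) ^ S i) N
        - s * a * cp_deriv (cp_coef lam) N a) <= a * (s * moment_dev N lam mm s).
Proof.
  intros Hs Ha.
  unfold cp_deriv, moment_dev. rewrite scal_sum, <- minus_sum.
  eapply Rle_trans. apply sum_f_R0_triangle. rewrite !scal_sum.
  apply sum_Rle. intros i Hi.
  set (et := mm (S i) / (INR (S i) * s) - lam (S i)).
  assert (Emm : mm (S i) = INR (S i) * s * (et + lam (S i))).
  { unfold et. pose proof (pos_INR i). rewrite S_INR. field. split; lra. }
  replace (- a) with (-1 * a) by ring. rewrite Rpow_mult_distr.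
  unfold cp_coef. rewrite Emm.
  replace (INR (S i) * s * (et + lam (S i)) / INR (fact (S i)) * ((-1) ^ S i * a ^ S i) -
     lam (S i) * (-1) ^ S i / INR (fact (S i)) * INR (S i) * a ^ i * (s * a))
    with ((-1) ^ S i * (a ^ i / INR (fact (S i))) * (a * s * et * INR (S i)))
    by (change (a ^ S i) with (a * a ^ i); field; apply INR_fact_neq_0).
  rewrite Rabs_mult, Rabs_mult, pow_1_abs, Rmult_1_l.
  assert (Hai : Rabs (a ^ i / INR (fact (S i))) <= 1).
  { pose proof (INR_fact_lt_0 (S i)).
    assert (1 <= INR (fact (S i))) by (apply (le_INR 1), lt_O_fact).
    pose proof (pow_le1 a i ltac:(lra)). pose proof (pow_le a i ltac:(lra)).
    rewrite Rabs_right by (apply Rle_ge, Rmult_le_pos; [lra | apply Rlt_le, Rinv_0_lt_compat; lra]).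
    apply Rmult_le_reg_r with (INR (fact (S i))). lra.
    unfold Rdiv. rewrite Rmult_assoc, Rinv_l by lra. lra. }
  replace (Rabs et * INR (S i) * s * a) with (Rabs (a * s * et * INR (S i))).
  2: { rewrite !Rabs_mult, (Rabs_right a), (Rabs_right s), (Rabs_right (INR (S i))); try ring.
       apply Rle_ge, pos_INR. lra. lra. }
  rewrite <- (Rmult_1_l (Rabs (a * s * et * INR (S i)))) at 2.
  apply Rmult_le_compat_r. apply Rabs_pos. auto.
Qed.

Lemma immigration_estimate (N : nat) (lam : nat -> R) (pe : nat -> R) (mm : nat -> R) (s x : R) :
  is_pmf pe -> (forall j, (1 <= j <= S (S N))%nat -> fact_moment pe j (mm j)) ->
  0 < s -> 0 <= x <= 1 ->
  Rabs (pgf pe x - 1 - s * (1 - x) * cp_deriv (cp_coef lam) N (1 - x))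
    <= immigration_error N lam mm s * (1 - x).
Proof.
  intros Pe Hm Hs Hx. set (a := 1 - x).
  set (mm' := fun j => match j with 0 => 1 | _ => mm j end).
  assert (T : Rabs (pgf pe x - moment_taylor mm' (x - 1) (S (S N)))
              <= mm' (S (S N)) / INR (fact (S (S N))) * (1 - x) ^ (S (S N))).
  { apply pgf_taylor; auto. intros j Hj. destruct j. apply fact_moment_0; auto. apply Hm. lia. }
  rewrite moment_taylor_split in T. simpl mm' in T.
  set (W := sum_f_R0 (fun i => mm (S i) / INR (fact (S i)) * (x - 1) ^ S i) N) in T.
  assert (HW := immigration_moment_terms N lam mm s a Hs ltac:(unfold a; lra)).
  replace (- a) with (x - 1) in HW by (unfold a; ring). fold W in HW.
  assert (Hrem : mm (S (S N)) / INR (fact (S (S N))) * (1 - x) ^ S (S N)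
                 <= mm (S (S N)) / INR (fact (S (S N))) * a).
  { apply Rmult_le_compat_l.
    apply Rmult_le_pos. apply (fact_moment_nonneg pe (S (S N))); auto; apply Hm; lia.
    apply Rlt_le, Rinv_0_lt_compat, INR_fact_lt_0.
    unfold a. change ((1 - x) ^ S (S N)) with ((1 - x) * (1 - x) ^ (S N)).
    pose proof (pow_le1 (1 - x) (S N) ltac:(lra)). nra. }
  replace (pgf pe x - 1 - s * a * cp_deriv (cp_coef lam) N a)
    with ((pgf pe x - (1 + W)) + (W - s * a * cp_deriv (cp_coef lam) N a)) by ring.
  eapply Rle_trans. apply Rabs_triang. unfold immigration_error. lra.
Qed.

Lemma one_step_estimate (N : nat) (lam : nat -> R) (px pe : nat -> R) (rh g2v : R) (mm : nat -> R) (x : R) :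
  is_pmf px -> is_pmf pe -> fact_moment px 1 rh -> fact_moment px 2 g2v ->
  (forall j, (1 <= j <= S (S N))%nat -> fact_moment pe j (mm j)) -> rh < 1 -> 0 <= x <= 1 ->
  Rabs (exp (cp_poly (cp_coef lam) N (1 - pgf px x)) * pgf pe x - exp (cp_poly (cp_coef lam) N (1 - x)))
  <= delta_loc (cp_coef lam) N (1 - rh) (g2v / 2) (immigration_error N lam mm (1 - rh)) * (1 - x).
Proof.
  intros Px Pe Hrh Hg2 Hm Hrh1 Hx.
  destruct (pgf_bounds px x Px Hx) as [_ HGb].
  assert (Hoff := offspring_estimate px rh g2v x Px Hrh Hg2 Hx).
  assert (0 <= g2v) by (apply (fact_moment_nonneg px 2); auto).
  assert (0 <= immigration_error N lam mm (1 - rh))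
    by (apply (immigration_error_nonneg N lam pe); auto; [apply Hm; lia | lra]).
  apply cp_local_estimate; try lra.
  - replace (1 - x - (1 - pgf px x)) with ((1 - x - (1 - pgf px x) - (1 - rh) * (1 - x)) + (1 - rh) * (1 - x)) by ring.
    eapply Rle_trans. apply Rabs_triang.
    rewrite (Rabs_right ((1 - rh) * (1 - x))) by (apply Rle_ge, Rmult_le_pos; lra). lra.
  - apply immigration_estimate; auto. lra.
Qed.

Lemma one_step_error_nonneg (N : nat) (lam px pe : nat -> R) (rh g2v : R) (mm : nat -> R) :
  is_pmf px -> is_pmf pe -> fact_moment px 2 g2v -> fact_moment pe (S (S N)) (mm (S (S N))) ->
  rh <= 1 ->
  0 <= delta_loc (cp_coef lam) N (1 - rh) (g2v / 2) (immigration_error N lam mm (1 - rh)).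
Proof.
  intros Px Pe Hg2 Hm Hrh. pose proof (fact_moment_nonneg px 2 g2v Px Hg2).
  apply delta_loc_nonneg; try lra. apply (immigration_error_nonneg N lam pe); auto; lra.
Qed.

(** * Propagation of the one-step error *)

Lemma contraction_exp_bound (Z s T : nat -> R) (K0 : nat) :
  (forall k, s k <= 1) -> (forall k, T (S k) = T k + s k) ->
  (forall k, (K0 <= k)%nat -> Z (S k) <= (1 - s k) * Z k) ->
  forall k, (K0 <= k)%nat -> Z k <= Rmax (Z K0) 0 * exp (T K0 - T k).
Proof.
  intros Hs HT HZ k Hk. induction Hk as [|k Hk IH].
  - replace (T K0 - T K0) with 0 by ring. rewrite exp_0, Rmult_1_r. apply Rmax_l.
  - set (C := Rmax (Z K0) 0 * exp (T K0 - T k)) in *.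
    assert (HC : 0 <= C) by (apply Rmult_le_pos; [apply Rmax_r | apply Rlt_le, exp_pos]).
    assert (Hexp : 1 - s k <= exp (- s k)) by (pose proof (exp_ineq1_le (- s k)); lra).
    rewrite HT. replace (T K0 - (T k + s k)) with ((T K0 - T k) + - s k) by ring.
    rewrite exp_plus, <- Rmult_assoc. fold C.
    specialize (HZ k Hk). specialize (Hs k).
    assert ((1 - s k) * Z k <= (1 - s k) * C) by (apply Rmult_le_compat_l; lra).
    assert ((1 - s k) * C <= exp (- s k) * C) by (apply Rmult_le_compat_r; lra). lra.
Qed.

Lemma exp_neg_small (C e T : R) : 0 <= C -> 0 < e -> C / e < T -> C * exp (- T) <= e.
Proof.
  intros HC He HT. pose proof (exp_ineq1_le T). pose proof (exp_pos T).
  rewrite exp_Ropp. apply Rmult_le_reg_r with (exp T); auto.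
  rewrite Rmult_assoc, Rinv_l, Rmult_1_r by lra.
  assert (C < e * T) by (apply Rmult_lt_reg_r with (/ e); [apply Rinv_0_lt_compat; lra |];
                         replace (e * T * / e) with T by (field; lra); auto).
  assert (e * T <= e * exp T) by (apply Rmult_le_compat_l; lra). lra.
Qed.

Lemma recursion_null (B r dl : nat -> R) :
  (forall n, 0 <= B n) -> (forall n, B (S n) <= r (S n) * B n + dl (S n)) ->
  (forall n, 0 <= r (S n) < 1) ->
  (forall e, e > 0 -> exists N0, forall n, (n >= N0)%nat -> dl (S n) <= e * (1 - r (S n))) ->
  (forall M, exists N, M < sum_f_R0 (fun i => 1 - r (S i)) N) -> Un_cv B 0.
Proof.
  intros HB Hrec Hr Hdl Hdiv e He.
  destruct (Hdl (e / 2) ltac:(lra)) as [K0 HK0].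
  set (T := fun k => sum_f_R0 (fun i => 1 - r (S i)) k).
  set (Z := fun k => B (S k) - e / 2).
  (* Z_k = B_(k+1) - e/2 contracts by the factor r_(k+2) once d is small *)
  assert (HZ := contraction_exp_bound Z (fun k => 1 - r (S (S k))) T K0
                  (fun k => ltac:(specialize (Hr (S k)); lra)) (fun k => eq_refl)
                  (fun k Hk => ltac:(unfold Z; specialize (Hrec (S k));
                                     specialize (HK0 (S k) ltac:(lia)); lra))).
  set (C := Rmax (Z K0) 0 * exp (T K0)).
  assert (HC : 0 <= C) by (unfold C; apply Rmult_le_pos; [apply Rmax_r | apply Rlt_le, exp_pos]).
  assert (Tmono : forall a b, (a <= b)%nat -> T a <= T b).
  { intros a b Hab. induction Hab. lra. unfold T in *; simpl. specialize (Hr (S m)). lra. }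
  destruct (Hdiv (C / (e / 4))) as [K1 HK1].
  exists (S (K0 + K1)). intros n Hn. destruct n as [|k]. lia.
  assert (Hsmall : C * exp (- T k) <= e / 4).
  { apply exp_neg_small; auto. lra. eapply Rlt_le_trans; [apply HK1 | apply Tmono; lia]. }
  specialize (HZ k ltac:(lia)).
  replace (Rmax (Z K0) 0 * exp (T K0 - T k)) with (C * exp (- T k)) in HZ
    by (unfold C; unfold Rminus; rewrite exp_plus; ring).
  unfold Z in HZ. specialize (HB (S k)).
  unfold Rdist. rewrite Rminus_0_r, Rabs_right by lra. lra.
Qed.

Fixpoint error_seq (b0 : R) (r d : nat -> R) (n : nat) : R :=
  match n with O => b0 | S n' => r (S n') * error_seq b0 r d n' + d (S n') end.

Lemma error_seq_nonneg (b0 : R) (r d : nat -> R) :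
  0 <= b0 -> (forall n, 0 <= r (S n)) -> (forall n, 0 <= d (S n)) ->
  forall n, 0 <= error_seq b0 r d n.
Proof.
  intros Hb0 Hr Hd n. induction n; simpl; auto.
  specialize (Hr n). specialize (Hd n). apply Rplus_le_le_0_compat; auto. apply Rmult_le_pos; auto.
Qed.

(* If F is Lipschitz at 1 with constant b0 and one step of the recursion maps F to
   itself up to d_n (1 - x), then |f_n(x) - F(x)| <= B_n (1 - x): the error of
   f_(n-1) at G_n(x) is damped by 1 - G_n(x) <= rho_n (1 - x). *)
Lemma error_propagation (xi eps : nat -> nat -> R) (F : R -> R) (rho dl : nat -> R) (b0 : R) :
  (forall n, (1 <= n)%nat -> is_pmf (xi n)) ->
  (forall n, (1 <= n)%nat -> is_pmf (eps n)) ->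
  (forall n, (1 <= n)%nat -> fact_moment (xi n) 1 (rho n)) ->
  (forall n, 0 <= error_seq b0 rho dl n) ->
  (forall x, 0 <= x <= 1 -> Rabs (1 - F x) <= b0 * (1 - x)) ->
  (forall n x, 0 <= x <= 1 ->
     Rabs (F (pgf (xi (S n)) x) * pgf (eps (S n)) x - F x) <= dl (S n) * (1 - x)) ->
  forall n x, 0 <= x <= 1 ->
    Rabs (process_pgf xi eps n x - F x) <= error_seq b0 rho dl n * (1 - x).
Proof.
  intros Hxi Heps Hrho HB HF1 Hstep n. induction n as [|n IH]; intros x Hx.
  - apply HF1, Hx.
  - assert (Px := Hxi (S n) ltac:(lia)). assert (Pe := Heps (S n) ltac:(lia)).
    destruct (pgf_bounds _ x Px Hx) as [_ HGb]. destruct (pgf_bounds _ x Pe Hx) as [_ HHb].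
    simpl process_pgf. simpl error_seq. specialize (Hstep n x Hx).
    set (G := pgf (xi (S n)) x) in *. set (H := pgf (eps (S n)) x) in *.
    assert (HGl : 1 + rho (S n) * (x - 1) <= G) by (apply pgf_lower; auto; apply Hrho; lia).
    specialize (IH G HGb). specialize (HB n).
    replace (process_pgf xi eps n G * H - F x)
      with ((process_pgf xi eps n G - F G) * H + (F G * H - F x)) by ring.
    eapply Rle_trans. apply Rabs_triang. rewrite Rabs_mult, (Rabs_right H) by lra.
    assert (Rabs (process_pgf xi eps n G - F G) * H <= Rabs (process_pgf xi eps n G - F G))
      by (pose proof (Rabs_pos (process_pgf xi eps n G - F G)); nra).
    assert (error_seq b0 rho dl n * (1 - G) <= error_seq b0 rho dl n * (rho (S n) * (1 - x)))
      by (apply Rmult_le_compat_l; lra).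
    lra.
Qed.

(** * A continuity theorem for generating functions on [0,1] *)

Fixpoint sum_lt (a : nat -> R) (k : nat) : R :=
  match k with O => 0 | S k' => sum_lt a k' + a k' end.

Lemma sum_lt_S a K : sum_lt a (S K) = sum_f_R0 a K.
Proof.
  induction K. simpl; ring.
  change (sum_lt a (S (S K))) with (sum_lt a (S K) + a (S K)). rewrite IHK. reflexivity.
Qed.

Lemma sum_lt_cv (u : nat -> nat -> R) (l : nat -> R) (k : nat) :
  (forall j, (j < k)%nat -> Un_cv (fun n => u n j) (l j)) ->
  Un_cv (fun n => sum_lt (u n) k) (sum_lt l k).
Proof.
  induction k; intros H; simpl. apply cv_const. apply CV_plus. apply IHk; intros; apply H; lia. apply H; lia.
Qed.

Lemma geom_sum (x : R) : 0 <= x < 1 -> infinite_sum (fun k => x ^ k) (/ (1 - x)).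
Proof.
  intros Hx. pose proof (GP_infinite x ltac:(rewrite Rabs_right; lra)) as H. unfold Pser in H.
  revert H. apply IS_ext. intros; ring.
Qed.

Lemma tail_bound (a : nat -> R) (f x : R) (k : nat) :
  0 <= x < 1 -> (forall j, 0 <= a j <= 1) -> infinite_sum (fun j => a j * x ^ j) f ->
  0 <= f - sum_lt (fun j => a j * x ^ j) k <= x ^ k / (1 - x).
Proof.
  intros Hx Ha Hf.
  assert (Hpos : forall j, 0 <= a j * x ^ j) by (intros j; apply Rmult_le_pos; [apply Ha | apply pow_le; lra]).
  assert (Hdp : forall j, 0 <= x ^ j - a j * x ^ j).
  { intros j. pose proof (pow_le x j (proj1 Hx)). specialize (Ha j). nra. }
  assert (Hd := IS_minus _ _ _ _ (geom_sum x Hx) Hf).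
  destruct k as [|k].
  - simpl. rewrite Rminus_0_r. split. apply (IS_nonneg _ _ Hpos Hf).
    pose proof (IS_nonneg _ _ Hdp Hd). replace (1 / (1 - x)) with (/ (1 - x)) by (field; lra). lra.
  - rewrite sum_lt_S. split.
    + pose proof (IS_partial_le _ _ k Hpos Hf). lra.
    + pose proof (IS_partial_le _ _ k Hdp Hd) as H.
      rewrite minus_sum, tech3 in H by lra.
      replace (x ^ S k / (1 - x)) with (/ (1 - x) - (1 - x ^ S k) / (1 - x)) by (field; lra). lra.
Qed.

Section Continuity.

Variables (L : nat -> nat -> R) (f : nat -> R -> R) (F : R -> R) (B0 : R).
Hypothesis HLpos : forall n k, 0 <= L n k.
Hypothesis Hf : forall n x, 0 <= x <= 1 -> infinite_sum (fun k => L n k * x ^ k) (f n x).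
Hypothesis Hf1 : forall n, f n 1 = 1.
Hypothesis Hcv : forall x, 0 <= x <= 1 -> Un_cv (fun n => f n x) (F x).
Hypothesis HB0 : 0 <= B0.
Hypothesis HF1 : forall x, 0 <= x <= 1 -> Rabs (1 - F x) <= B0 * (1 - x).

Lemma L_bounds n : forall j, 0 <= L n j <= 1.
Proof.
  intros j. split; auto. rewrite <- (Hf1 n). specialize (Hf n 1 ltac:(lra)).
  pose proof (IS_term_le _ _ j (fun i => Rmult_le_pos _ _ (HLpos n i) (pow_le 1 i ltac:(lra))) Hf) as H.
  cbv beta in H. rewrite pow1, Rmult_1_r in H. auto.
Qed.

(* The limit of the k-th coefficients (chosen classically; see limit_law_cv). *)
Definition limit_law (k : nat) : R := epsilon (inhabits 0) (fun l => Un_cv (fun n => L n k) l).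

Lemma limit_law_spec k : (exists l, Un_cv (fun n => L n k) l) -> Un_cv (fun n => L n k) (limit_law k).
Proof. intros H. apply (epsilon_spec (inhabits 0) (fun l => Un_cv (fun n => L n k) l)). auto. Qed.

(* If the coefficients below k converge, so does the k-th one: dividing the
   remainder f n x - sum_(j<k) L n j x^j by x^k leaves L n k up to x/(1-x), which
   is small for small x, so (L n k) is a Cauchy sequence. *)
Lemma coefficient_cauchy k : (forall j, (j < k)%nat -> Un_cv (fun n => L n j) (limit_law j)) ->
  exists l, Un_cv (fun n => L n k) l.
Proof.
  intros Hprev.
  destruct (Rcomplete.R_complete (fun n => L n k)) as [l Hl]; [| exists l; exact Hl].
  intros e He.
  set (x := e / (e + 8)).
  assert (Hx : 0 < x < 1).
  { unfold x; split. apply Rdiv_lt_0_compat; lra.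
    apply Rmult_lt_reg_r with (e + 8). lra. unfold Rdiv; rewrite Rmult_assoc, Rinv_l; lra. }
  assert (Hxr : x / (1 - x) = e / 8) by (unfold x; field; lra).
  assert (Hxk : 0 < x ^ k) by (apply pow_lt; lra).
  set (V := fun n => (f n x - sum_lt (fun j => L n j * x ^ j) k) / x ^ k).
  assert (HV : Un_cv V ((F x - sum_lt (fun j => limit_law j * x ^ j) k) / x ^ k)).
  { unfold V, Rdiv. apply CV_mult; [| apply cv_const]. apply CV_minus. apply Hcv; lra.
    apply (sum_lt_cv (fun n j => L n j * x ^ j)). intros j Hj.
    apply (cv_ext (fun n => x ^ j * L n j)). intros; ring. rewrite Rmult_comm. apply cv_scal. auto. }
  assert (HVb : forall n, L n k <= V n <= L n k + e / 8).
  { intros n. pose proof (tail_bound (L n) (f n x) x (S k) ltac:(lra) (L_bounds n) (Hf n x ltac:(lra))) as T.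
    simpl sum_lt in T. unfold V. rewrite <- Hxr.
    split; apply Rmult_le_reg_r with (x ^ k); auto; unfold Rdiv; rewrite Rmult_assoc, Rinv_l by lra.
    - lra.
    - replace ((L n k + x * / (1 - x)) * x ^ k) with (L n k * x ^ k + x ^ S k / (1 - x)) by (simpl; field; lra).
      lra. }
  destruct (HV (e / 4) ltac:(lra)) as [N HN].
  exists N. intros n m Hn Hm. specialize (HN n Hn) as H1. specialize (HN m Hm) as H2.
  unfold Rdist in *. apply Rabs_def2 in H1. apply Rabs_def2 in H2.
  pose proof (HVb n). pose proof (HVb m). apply Rabs_def1; lra.
Qed.

Lemma limit_law_cv k : Un_cv (fun n => L n k) (limit_law k).
Proof.
  induction k as [k IH] using (well_founded_induction lt_wf).
  apply limit_law_spec, coefficient_cauchy. auto.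
Qed.

Lemma limit_law_nonneg k : 0 <= limit_law k.
Proof. apply (cv_le_loc (fun _ => 0) (fun n => L n k) _ _ 0). intros; auto. apply cv_const. apply limit_law_cv. Qed.

Lemma limit_law_tail x K : 0 <= x < 1 ->
  0 <= F x - sum_lt (fun j => limit_law j * x ^ j) K <= x ^ K / (1 - x).
Proof.
  intros Hx.
  assert (Hc : Un_cv (fun n => f n x - sum_lt (fun j => L n j * x ^ j) K)
                     (F x - sum_lt (fun j => limit_law j * x ^ j) K)).
  { apply CV_minus. apply Hcv; lra. apply (sum_lt_cv (fun n j => L n j * x ^ j)). intros j _.
    apply (cv_ext (fun n => x ^ j * L n j)). intros; ring. rewrite Rmult_comm. apply cv_scal. apply limit_law_cv. }
  pose proof (fun n => tail_bound (L n) (f n x) x K Hx (L_bounds n) (Hf n x ltac:(lra))) as T.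
  split.
  - apply (cv_le_loc (fun _ => 0) _ _ _ 0 (fun n _ => proj1 (T n)) (cv_const _) Hc).
  - apply (cv_le_loc _ (fun _ => x ^ K / (1 - x)) _ _ 0 (fun n _ => proj2 (T n)) Hc (cv_const _)).
Qed.

Lemma limit_law_gf x : 0 <= x < 1 -> infinite_sum (fun k => limit_law k * x ^ k) (F x).
Proof.
  intros Hx e He.
  destruct (pow_lt_1_zero x ltac:(rewrite Rabs_right; lra) (e * (1 - x))
              ltac:(apply Rmult_lt_0_compat; lra)) as [N HN].
  exists N. intros n Hn. specialize (HN (S n) ltac:(lia)).
  pose proof (limit_law_tail x (S n) Hx) as T. rewrite sum_lt_S in T.
  rewrite Rabs_right in HN by (apply Rle_ge, pow_le; lra).
  assert (x ^ S n / (1 - x) < e).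
  { apply Rmult_lt_reg_r with (1 - x). lra. unfold Rdiv; rewrite Rmult_assoc, Rinv_l by lra. lra. }
  unfold Rdist. rewrite Rabs_minus_sym, Rabs_right by lra. lra.
Qed.

Lemma F_at_1 : F 1 = 1.
Proof.
  pose proof (HF1 1 ltac:(lra)). replace (B0 * (1 - 1)) with 0 in H by ring.
  apply Rabs_le_inv in H. lra.
Qed.

(* No mass escapes to infinity: the partial sums of the limit are at most 1, and
   at least F x minus a small tail, where F x is close to 1 for x close to 1. *)
Lemma limit_law_sum1 : infinite_sum limit_law 1.
Proof.
  intros e He.
  assert (Hup : forall K, sum_lt limit_law K <= 1).
  { intros K. apply (cv_le_loc (fun n => sum_lt (L n) K) (fun _ => 1) _ _ 0).
    2: apply (sum_lt_cv L limit_law K); intros; apply limit_law_cv. 2: apply cv_const.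
    intros n _. specialize (Hf n 1 ltac:(lra)). rewrite Hf1 in Hf.
    destruct K. simpl; lra. rewrite sum_lt_S.
    pose proof (IS_partial_le _ _ K (fun j => Rmult_le_pos _ _ (HLpos n j) (pow_le 1 j ltac:(lra))) Hf).
    replace (sum_f_R0 (L n) K) with (sum_f_R0 (fun k => L n k * 1 ^ k) K). lra.
    apply sum_eq; intros; rewrite pow1; ring. }
  set (dx := Rmin (e / (2 * (B0 + 1))) (1 / 2)).
  assert (Hdx : 0 < dx <= 1/2).
  { unfold dx. split. apply Rmin_pos. apply Rdiv_lt_0_compat; lra. lra. apply Rmin_r. }
  set (x := 1 - dx).
  assert (Hx : 0 <= x < 1) by (unfold x; lra).
  assert (HFx : 1 - e / 2 <= F x).
  { pose proof (HF1 x ltac:(lra)) as H. apply Rabs_le_inv in H.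
    assert (B0 * dx <= e / 2).
    { apply Rle_trans with ((B0 + 1) * (e / (2 * (B0 + 1)))).
      apply Rmult_le_compat; try lra. apply Rmin_l. right; field; lra. }
    replace (1 - x) with dx in H by (unfold x; ring). lra. }
  destruct (pow_lt_1_zero x ltac:(rewrite Rabs_right; lra) (e / 2 * (1 - x))
              ltac:(apply Rmult_lt_0_compat; lra)) as [N HN].
  exists N. intros n Hn. specialize (HN (S n) ltac:(lia)).
  rewrite Rabs_right in HN by (apply Rle_ge, pow_le; lra).
  pose proof (limit_law_tail x (S n) Hx) as T. rewrite sum_lt_S in T.
  assert (x ^ S n / (1 - x) < e / 2).
  { apply Rmult_lt_reg_r with (1 - x). lra. unfold Rdiv; rewrite Rmult_assoc, Rinv_l by lra. lra. }
  assert (sum_f_R0 (fun j => limit_law j * x ^ j) n <= sum_f_R0 limit_law n).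
  { apply sum_Rle. intros j _. pose proof (limit_law_nonneg j).
    assert (x ^ j <= 1) by (apply pow_le1; lra).
    assert (limit_law j * x ^ j <= limit_law j * 1) by (apply Rmult_le_compat_l; lra). lra. }
  specialize (Hup (S n)). rewrite sum_lt_S in Hup. unfold Rdist. rewrite Rabs_left1 by lra. lra.
Qed.

Theorem pgf_continuity :
  exists p, is_pmf p /\
    (forall x, 0 <= x <= 1 -> infinite_sum (fun k => p k * x ^ k) (F x)) /\
    (forall k, Un_cv (fun n => L n k) (p k)).
Proof.
  exists limit_law. split; [split; [apply limit_law_nonneg | apply limit_law_sum1] | split].
  - intros x Hx. destruct (Rle_lt_or_eq_dec x 1 (proj2 Hx)) as [Hlt | ->].
    + apply limit_law_gf. lra.
    + rewrite F_at_1. apply (IS_ext limit_law). intros; rewrite pow1; ring. apply limit_law_sum1.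
  - apply limit_law_cv.
Qed.

End Continuity.

(** * The exponent of CP(mu) *)

(* sum_(i<=n) (x^(i+1) - 1) (-1)^(n-i) / ((i+1)! (n-i)!) = (x-1)^(n+1) / (n+1)!,
   by the binomial formula for (x - 1)^(n+1) - (1 - 1)^(n+1). *)
Lemma binomial_alternating_sum (x : R) (n : nat) :
  sum_f_R0 (fun i => / INR (fact (S i)) * ((-1) ^ (n - i) / INR (fact (n - i))) * (x ^ S i - 1)) n
  = (x - 1) ^ S n / INR (fact (S n)).
Proof.
  assert (H1 := binomial x (-1) (S n)).
  assert (H0 := binomial 1 (-1) (S n)).
  rewrite decomp_sum in H1 by lia. rewrite decomp_sum in H0 by lia. simpl pred in H0, H1.
  replace (x + -1) with (x - 1) in H1 by ring.
  replace (1 + -1) with 0 in H0 by ring. rewrite pow_i in H0 by lia.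
  replace ((x - 1) ^ S n) with ((x - 1) ^ S n - 0) by ring.
  rewrite H1, H0. clear H0 H1.
  assert (HC : forall i, (i <= n)%nat ->
     Binomial.C (S n) (S i) = INR (fact (S n)) * (/ INR (fact (S i)) * / INR (fact (n - i)))).
  { intros i Hi. unfold Binomial.C. replace (S n - S i)%nat with (n - i)%nat by lia.
    pose proof (INR_fact_lt_0 (S i)). pose proof (INR_fact_lt_0 (n - i)). field. lra. }
  match goal with |- _ = (?a + ?s1 - (?b + ?s2)) / _ =>
    replace (a + s1 - (b + s2)) with (s1 - s2) by ring end.
  rewrite <- minus_sum. unfold Rdiv. rewrite Rmult_comm, scal_sum. apply sum_eq. intros i Hi.
  rewrite HC by auto. rewrite pow1. replace (S n - S i)%nat with (n - i)%nat by lia.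
  pose proof (INR_fact_lt_0 (S n)). pose proof (INR_fact_lt_0 (S i)). pose proof (INR_fact_lt_0 (n - i)).
  field. repeat split; lra.
Qed.

(* Exchanging the two sums in sum_j mu_j (x^j - 1) collects each lambda_(j) with the
   alternating sum above, leaving lambda_j (x-1)^j / j!. *)
Lemma mu_exponent_rearrange (lam : nat -> R) (x : R) (N : nat) :
  sum_f_R0 (fun i => / INR (fact (S i)) *
     sum_f_R0 (fun i' => (-1) ^ i' / INR (fact i') * lam (S i + i')%nat) (N - i) * (x ^ S i - 1)) N
  = sum_f_R0 (fun j => lam (S j) * (x - 1) ^ S j / INR (fact (S j))) N.
Proof.
  induction N.
  - simpl. field.
  - set (g := fun i => / INR (fact (S i)) * ((-1) ^ (S N - i) / INR (fact (S N - i))) * (x ^ S i - 1)).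
    assert (Hsplit : sum_f_R0 (fun i => / INR (fact (S i)) *
       sum_f_R0 (fun i' => (-1) ^ i' / INR (fact i') * lam (S i + i')%nat) (S N - i) * (x ^ S i - 1)) (S N)
       = sum_f_R0 (fun i => / INR (fact (S i)) *
       sum_f_R0 (fun i' => (-1) ^ i' / INR (fact i') * lam (S i + i')%nat) (N - i) * (x ^ S i - 1)) N
         + lam (S (S N)) * sum_f_R0 g (S N)).
    { assert (sum0 : forall f, sum_f_R0 f 0 = f 0%nat) by reflexivity.
      rewrite (tech5 _ N), (tech5 g N), Nat.sub_diag, sum0.
      rewrite Rmult_plus_distr_l, scal_sum, <- Rplus_assoc, <- sum_plus.
      f_equal.
      - apply sum_eq. intros i Hi. replace (S N - i)%nat with (S (N - i)) by lia.
        rewrite tech5. unfold g. replace (S N - i)%nat with (S (N - i)) by lia.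
        replace (S i + S (N - i))%nat with (S (S N)) by lia. unfold Rdiv. ring.
      - unfold g. rewrite Nat.sub_diag.
        replace (S (S N) + 0)%nat with (S (S N)) by lia. unfold Rdiv. ring. }
    rewrite Hsplit, IHN. unfold g. rewrite binomial_alternating_sum, (tech5 _ N). unfold Rdiv. ring.
Qed.

Lemma cp_exponent_mu (N : nat) (lam : nat -> R) (x : R) :
  sum_f_R0 (fun i => mu_of (S (S N)) lam (S i) * (x ^ S i - 1)) (S (S N) - 1 - 1)
  = cp_poly (cp_coef lam) N (1 - x).
Proof.
  replace (S (S N) - 1 - 1)%nat with N by lia.
  transitivity (sum_f_R0 (fun i => / INR (fact (S i)) *
     sum_f_R0 (fun i' => (-1) ^ i' / INR (fact i') * lam (S i + i')%nat) (N - i) * (x ^ S i - 1)) N).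
  { apply sum_eq. intros i Hi. unfold mu_of. replace (S (S N) - S i - 1)%nat with (N - i)%nat by lia.
    reflexivity. }
  rewrite mu_exponent_rearrange. unfold cp_poly, cp_coef. apply sum_eq. intros i _.
  replace (x - 1) with (-1 * (1 - x)) by ring. rewrite Rpow_mult_distr. unfold Rdiv. ring.
Qed.

(** * The one-step error is o(1 - rho_n) *)

(* delta_loc is homogeneous of degree one when g and e1 are proportional to s. *)
Definition delta_ratio (c : nat -> R) (N : nat) (s q w : R) : R :=
  exp (cp_C0 c N) * (cp_Lip c N * exp (cp_Lip c N) * s * (1 + q) * (cp_C1 c N + w) + cp_C1 c N * q
    + (cp_C2 c N + cp_Lip c N ^ 2 * exp (cp_Lip c N)) * s * (1 + q) ^ 2 + w).

Lemma delta_loc_scaled c N s q w : delta_loc c N s (s * q) (s * w) = s * delta_ratio c N s q w.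
Proof. unfold delta_loc, delta_ratio. ring. Qed.

Lemma delta_ratio_cv c N (s q w : nat -> R) :
  Un_cv s 0 -> Un_cv q 0 -> Un_cv w 0 -> Un_cv (fun n => delta_ratio c N (s n) (q n) (w n)) 0.
Proof.
  intros Hs Hq Hw. unfold delta_ratio.
  set (A := cp_Lip c N * exp (cp_Lip c N)). set (K := cp_C2 c N + cp_Lip c N ^ 2 * exp (cp_Lip c N)).
  assert (H1q : Un_cv (fun n => 1 + q n) (1 + 0)) by (apply CV_plus; [apply cv_const | auto]).
  replace 0 with (exp (cp_C0 c N) * (A * 0 * (1 + 0) * (cp_C1 c N + 0) + cp_C1 c N * 0
                    + K * 0 * (1 + 0) ^ 2 + 0)) by ring.
  apply cv_scal. repeat apply CV_plus; auto.
  - repeat apply CV_mult; auto; try apply cv_const. apply CV_plus; auto. apply cv_const.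
  - apply cv_scal; auto.
  - apply CV_mult. apply cv_scal; auto.
    apply (cv_ext (fun n => (1 + q n) * (1 + q n))). intros; ring.
    replace ((1 + 0) ^ 2) with ((1 + 0) * (1 + 0)) by ring. apply CV_mult; auto.
Qed.

Lemma one_step_error_negligible (N : nat) (rho g2 : nat -> R) (m : nat -> nat -> R) (lam : nat -> R) :
  (forall n, (1 <= n)%nat -> rho n < 1) -> Un_cv rho 1 ->
  Un_cv (fun n => g2 n / (1 - rho n)) 0 ->
  (forall j, (1 <= j <= S (S N))%nat -> Un_cv (fun n => m n j / (INR j * (1 - rho n))) (lam j)) ->
  lam (S (S N)) = 0 ->
  forall e, e > 0 -> exists N0, forall n, (n >= N0)%nat ->
    delta_loc (cp_coef lam) N (1 - rho (S n)) (g2 (S n) / 2)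
      (immigration_error N lam (m (S n)) (1 - rho (S n))) <= e * (1 - rho (S n)).
Proof.
  intros Hrho1 Hrholim Hg2lim Hlam HlamJ.
  set (s := fun n => 1 - rho n).
  set (q := fun n => g2 n / s n / 2).
  set (kJ := INR (S (S N)) / INR (fact (S (S N)))).
  set (w := fun n => moment_dev N lam (m n) (s n) + m n (S (S N)) / (INR (S (S N)) * s n) * kJ).
  assert (Hs0 : Un_cv s 0).
  { replace 0 with (1 - 1) by ring. apply CV_minus. apply cv_const. auto. }
  assert (Hq0 : Un_cv q 0).
  { replace 0 with (0 * / 2) by ring. apply CV_mult; [exact Hg2lim | apply cv_const]. }
  assert (Hw0 : Un_cv w 0).
  { replace 0 with (0 + 0 * kJ) by ring. apply CV_plus.
    - apply cv_sum0. intros i Hi. replace 0 with (0 * INR (S i)) by ring.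
      apply CV_mult; [| apply cv_const]. apply cv_abs0.
      replace 0 with (lam (S i) - lam (S i)) by ring. apply CV_minus; [| apply cv_const]. apply Hlam. lia.
    - apply CV_mult; [| apply cv_const]. rewrite <- HlamJ. apply Hlam. lia. }
  intros e He. destruct (delta_ratio_cv (cp_coef lam) N s q w Hs0 Hq0 Hw0 e He) as [N1 HN1].
  exists N1. intros n Hn. specialize (HN1 (S n) ltac:(lia)).
  unfold Rdist in HN1. rewrite Rminus_0_r in HN1. apply Rabs_def2 in HN1.
  assert (Hsn : 0 < s (S n)) by (unfold s; pose proof (Hrho1 (S n) ltac:(lia)); lra).
  assert (Hg : g2 (S n) / 2 = s (S n) * q (S n)) by (unfold q; field; lra).
  assert (He1 : immigration_error N lam (m (S n)) (1 - rho (S n)) = s (S n) * w (S n)).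
  { unfold immigration_error, w, kJ. fold (s (S n)).
    pose proof (INR_fact_lt_0 (S (S N))). pose proof (pos_INR (S N)). rewrite (S_INR (S N)).
    field. repeat split; lra. }
  rewrite Hg, He1. fold (s (S n)). rewrite delta_loc_scaled, Rmult_comm.
  apply Rmult_le_compat_r; lra.
Qed.

Theorem theorem3
  (J : nat) (HJ : (2 <= J)%nat)
  (xi eps : nat -> nat -> R)            (* xi n = law of xi_{n,j}, eps n = law of eps_n, n >= 1 *)
  (rho g2 : nat -> R) (m : nat -> nat -> R) (lam : nat -> R)
  (L : nat -> nat -> R)                 (* L n = law of X_n *)
  (Hxi : forall n, (1 <= n)%nat -> is_pmf (xi n))
  (Heps : forall n, (1 <= n)%nat -> is_pmf (eps n))
  (Hrho : forall n, (1 <= n)%nat -> fact_moment (xi n) 1 (rho n))      (* rho_n = G_n'(1) *)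
  (Hg2 : forall n, (1 <= n)%nat -> fact_moment (xi n) 2 (g2 n))        (* G_n''(1) < oo *)
  (Hm : forall n j, (1 <= n)%nat -> (1 <= j <= J)%nat ->
          fact_moment (eps n) j (m n j))                              (* m_{n,j} = H_n^(j)(1) *)
  (Hrho1 : forall n, (1 <= n)%nat -> rho n < 1)
  (Hrholim : Un_cv rho 1)
  (Hdiv : forall M, exists N, M < sum_f_R0 (fun i => 1 - rho (S i)) N)
  (Hg2lim : Un_cv (fun n => g2 n / (1 - rho n)) 0)
  (Hlam : forall j, (1 <= j <= J)%nat ->
          Un_cv (fun n => m n j / (INR j * (1 - rho n))) (lam j))
  (HlamJ : lam J = 0)
  (HL : is_law_of_process xi eps L) :
  exists p, is_CP (J - 1) (mu_of J lam) p /\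
    forall k, Un_cv (fun n => L n k) (p k).
Proof.
  destruct J as [|[|N]]; try lia.
  set (c := cp_coef lam). set (F := fun x => exp (cp_poly c N (1 - x))).
  set (dl := fun n => delta_loc c N (1 - rho n) (g2 n / 2) (immigration_error N lam (m n) (1 - rho n))).
  set (b0 := cp_C0 c N * exp (cp_C0 c N)).
  set (B := error_seq b0 rho dl).
  assert (Hrho0 : forall n, 0 <= rho (S n))
    by (intros n; apply (fact_moment_nonneg (xi (S n)) 1); [apply Hxi | apply Hrho]; lia).
  assert (HB0 : 0 <= b0) by (apply Rmult_le_pos; [apply cp_C0_nonneg | apply Rlt_le, exp_pos]).
  assert (Hdl0 : forall n, 0 <= dl (S n)).
  { intros n. apply (one_step_error_nonneg N lam (xi (S n)) (eps (S n)));
      [apply Hxi | apply Heps | apply Hg2 | apply Hm | apply Rlt_le, Hrho1]; lia. }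
  assert (HBpos := error_seq_nonneg b0 rho dl HB0 Hrho0 Hdl0).
  assert (Herr := error_propagation xi eps F rho dl b0 Hxi Heps Hrho HBpos (cp_pgf_near_1 c N)
    (fun n x Hx => one_step_estimate N lam (xi (S n)) (eps (S n)) (rho (S n)) (g2 (S n)) (m (S n)) x
       (Hxi (S n) ltac:(lia)) (Heps (S n) ltac:(lia)) (Hrho (S n) ltac:(lia)) (Hg2 (S n) ltac:(lia))
       (fun j Hj => Hm (S n) j ltac:(lia) Hj) (Hrho1 (S n) ltac:(lia)) Hx)).
  assert (HB : Un_cv B 0).
  { apply (recursion_null B rho dl HBpos); [intros; apply Rle_refl | | | exact Hdiv].
    - intros n; split; [apply Hrho0 | apply Hrho1; lia].
    - apply one_step_error_negligible; auto. }
  assert (Hcv : forall x, 0 <= x <= 1 -> Un_cv (fun n => process_pgf xi eps n x) (F x)).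
  { intros x Hx. apply (cv_of_error_bound _ (fun n => B n * (1 - x))); [intros; apply Herr; auto |].
    replace 0 with (0 * (1 - x)) by ring. apply CV_mult; [exact HB | apply cv_const]. }
  destruct (pgf_continuity L (process_pgf xi eps) F b0
              (fun n => proj1 (law_pgf xi eps L Hxi Heps HL n))
              (fun n => proj2 (law_pgf xi eps L Hxi Heps HL n))
              (process_pgf_at_1 xi eps Hxi Heps) Hcv HB0 (cp_pgf_near_1 c N))
    as [p [Hp [Hgf Hlim]]].
  exists p. split; [split; [exact Hp |] | exact Hlim].
  intros x Hx. rewrite cp_exponent_mu. apply Hgf, Hx.
Qed.
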